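(* On $\mathbb{R}^d$ with Cartesian coordinates $x^1,\dots,x^d$, let $\vec E=\sum_i x^i\,\partial/\partial x^i$ be the Euler vector field and let $\vec V=\sum_j V^j(x^1,\dots,x^d)\,\partial/\partial x^j$ be a nonzero vector field whose coefficients $V^j$ are homogeneous polynomials of the same total degree $k\geq 2$. Then the bi-vector $P=\vec V\wedge\vec E$ is Poisson, i.e. $[\![P,P]\!]=0$.
   Context: $[\![\cdot,\cdot]\!]$ denotes the Schouten bracket of multivector fields. *)

From HB Require Import structures.
From mathcomp Require Import all_boot all_order all_algebra.
From mathcomp Require Import reals.
From mathcomp.multinomials Require Import mpoly.
Set Implicit Arguments. Unset Strict Implicit. Unset Printing Implicit Defensive.
Import Order.TTheory GRing.Theory Num.Theory.
Local Open Scope ring_scope.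

(* Multivector fields on R^d with polynomial coefficients, in the Cartesian
   coordinates x^0, ..., x^(d-1) (the variables 'X_i of {mpoly R[d]}).       *)

Definition vfield (R : realType) (d : nat) := 'I_d -> {mpoly R[d]}.

(* A bivector  (1/2) sum_{i,j} P^{ij} d_i /\ d_j  given by its coefficients
   (the antisymmetric matrix P^{ij}). *)
Definition bivector (R : realType) (d : nat) := 'I_d -> 'I_d -> {mpoly R[d]}.

Definition trivector (R : realType) (d : nat) :=
  'I_d -> 'I_d -> 'I_d -> {mpoly R[d]}.

Definition euler (R : realType) (d : nat) : vfield R d := fun i => 'X_i.

Definition wedge (R : realType) (d : nat) (X Y : vfield R d) : bivector R d :=
  fun i j => X i * Y j - X j * Y i.

Definition schouten2 (R : realType) (d : nat) (P Q : bivector R d)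
  : trivector R d :=
  fun i j k => \sum_(l < d)
    (  P l i * (Q j k)^`M(l) + Q l i * (P j k)^`M(l)
     + P l j * (Q k i)^`M(l) + Q l j * (P k i)^`M(l)
     + P l k * (Q i j)^`M(l) + Q l k * (P i j)^`M(l)).

From HB Require Import structures.
From mathcomp Require Import all_boot all_order all_algebra.
From mathcomp Require Import reals.
From mathcomp.multinomials Require Import mpoly.
From mathcomp Require Import ring.
Import Order.TTheory GRing.Theory Num.Theory.
Local Open Scope ring_scope.
Set Implicit Arguments. Unset Strict Implicit. Unset Printing Implicit Defensive.

(* Write P = V /\ E and W(p) = sum_l W^l d_l p for the derivative along a
   vector field W. Then sum_l P^{la} d_l P^{bc} = x^a V(P^{bc}) - V^a E(P^{bc}).
   As P^{bc} is homogeneous of degree k + 1, Euler's identity gives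
   E(P^{bc}) = (k + 1) P^{bc}; as V is a derivation with V(x^c) = V^c,
   V(P^{bc}) = x^c V(V^b) - x^b V(V^c). In the cyclic sum over (a, b, c) the
   terms x^a x^c V(V^b) cancel in pairs, and sum_cyc V^a P^{bc} is the
   determinant of the rows V, V, x, hence 0. The argument works for every
   degree k and for V = 0. *)

Definition deriv_along (R : nzRingType) (n : nat) (V : 'I_n -> {mpoly R[n]})
    (p : {mpoly R[n]}) : {mpoly R[n]} :=
  \sum_(l < n) V l * p^`M(l).

Section DerivAlong.
Variables (R : nzRingType) (n : nat).
Implicit Types (V : 'I_n -> {mpoly R[n]}) (p q : {mpoly R[n]}).

Lemma mderiv_var (i l : 'I_n) : ('X_i : {mpoly R[n]})^`M(l) = (i == l)%:R.
Proof.
rewrite mderivX mnm1E; case: eqP => [->|_]; last by rewrite scale0r.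
have ->: (U_(l) - U_(l) = 0 :> 'X_{1..n})%MM by apply/mnmP=> j; rewrite !mnmE subnn.
by rewrite mpolyX0 scale1r.
Qed.

Lemma deriv_along_var V i : deriv_along V 'X_i = V i.
Proof.
rewrite /deriv_along (bigD1 i) //= mderiv_var eqxx mulr1 big1 ?addr0 // => l.
by rewrite mderiv_var eq_sym => /negbTE ->; rewrite mulr0.
Qed.

Lemma deriv_alongB V : {morph deriv_along V : p q / p - q}.
Proof.
move=> p q; rewrite /deriv_along -sumrB.
by apply: eq_bigr => l _; rewrite mderivB mulrBr.
Qed.

Lemma euler_monomial (m : 'X_{1..n}) :
  deriv_along (fun l => 'X_l) ('X_[m] : {mpoly R[n]}) = 'X_[m] *+ mdeg m.
Proof.
have Xl_mderiv (l : 'I_n) : 'X_l * ('X_[m] : {mpoly R[n]})^`M(l) = 'X_[m] *+ m l.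
  rewrite mderivX scaler_nat mulrnAr -mpolyXD.
  have [->|m_l_neq0] := eqVneq (m l) 0%N; first by rewrite !mulr0n.
  rewrite addmC submK //; apply/mnm_lepP => j.
  by rewrite mnm1E; case: eqP => [<-|]; rewrite ?lt0n.
by rewrite /deriv_along (eq_bigr _ (fun l _ => Xl_mderiv l)) mdegE -sumrMnr.
Qed.

Lemma euler_homog p k :
  p \is k.-homog -> deriv_along (fun l => 'X_l) p = p *+ k.
Proof.
move=> /dhomogP homp; rewrite {1 2}(mpolyE p) /deriv_along.
under eq_bigr => l _ do rewrite raddf_sum mulr_sumr.
rewrite exchange_big /= -sumrMnl big_seq [RHS]big_seq.
apply: eq_bigr => m m_supp.
under eq_bigr => l _ do rewrite linearZ /= -commr_mpolyX -scalerAl commr_mpolyX.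
rewrite -scaler_sumr -[\sum_l _]/(deriv_along _ _) euler_monomial.
by rewrite homp // scalerMnr.
Qed.

End DerivAlong.

Section DerivAlongComRing.
Variables (R : comNzRingType) (n : nat).
Implicit Types (V W : 'I_n -> {mpoly R[n]}) (p q r : {mpoly R[n]}).

Lemma deriv_alongM V p q :
  deriv_along V (p * q) = deriv_along V p * q + p * deriv_along V q.
Proof.
rewrite /deriv_along mulr_suml mulr_sumr -big_split.
by apply: eq_bigr => l _ /=; rewrite mderivM; ring.
Qed.

Lemma deriv_along_lincomb V W p q r :
  deriv_along (fun l => V l * p - q * W l) r =
  deriv_along V r * p - q * deriv_along W r.
Proof.
rewrite /deriv_along mulr_suml mulr_sumr -sumrB.
by apply: eq_bigr => l _; ring.
Qed.

End DerivAlongComRing.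

Section WedgeEuler.
Variables (R : realType) (d k : nat) (V : vfield R d).
Hypothesis homV : forall j, V j \is k.-homog.

Lemma wedge_euler_homog b c : wedge V (@euler R d) b c \is k.+1.-homog.
Proof.
have homX (i : 'I_d) : ('X_i : {mpoly R[d]}) \is 1.-homog.
  by rewrite dhomogX; apply/eqP/mdeg1.
by rewrite /wedge /euler -addn1 rpredB // dhomogM.
Qed.

Lemma wedge_euler_contraction a b c :
  \sum_(l < d) wedge V (@euler R d) l a * (wedge V (@euler R d) b c)^`M(l) =
  'X_a * deriv_along V (wedge V (@euler R d) b c)
  - V a * wedge V (@euler R d) b c *+ k.+1.
Proof.
rewrite -[LHS]/(deriv_along (fun l => wedge V (@euler R d) l a) _).
rewrite {1}/wedge /euler deriv_along_lincomb.
by rewrite (euler_homog (wedge_euler_homog b c)) mulrnAr mulrC.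
Qed.

Lemma deriv_along_wedge_euler b c :
  deriv_along V (wedge V (@euler R d) b c) =
  'X_c * deriv_along V (V b) - 'X_b * deriv_along V (V c).
Proof.
by rewrite /wedge /euler deriv_alongB !deriv_alongM !deriv_along_var; ring.
Qed.

End WedgeEuler.

Theorem lemmaA1 (R : realType) (d k : nat) (V : vfield R d) :
  (2 <= k)%N ->
  (exists j, V j != 0) ->
  (forall j, V j \is k.-homog) ->
  forall i j l, schouten2 (wedge V (@euler R d)) (wedge V (@euler R d)) i j l = 0.
Proof.
move=> _ _ homV a b c; rewrite /schouten2 !big_split /=.
rewrite !(wedge_euler_contraction homV) !deriv_along_wedge_euler /wedge.
ring.
Qed.
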